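(* Let $K=h^{-1/3}$ and $L=h^{-4/3}$. Let $x$ be a reference grid point in $\Omega=(-1,1)$ and $\phi$ a smooth function defined in a neighborhood of the grid. Then the scheme $F^{1D,e,\delta}$ is consistent with $F^{1D}$ and has accuracy \[ F^{1D,e,\delta}[\phi](x)-F^{1D}[\phi](x)=\mathcal O(h^{2/3}). \] Moreover, $F^{1D,e,\delta}$ is Lipschitz continuous with constant $C^h=h^{-4/3}+2h^{-10/3}$.
   Context: $F^{1D}[u]=(u_x^2u_{xx})^{1/3}$ (real cube root). With $A(p,q)=(p^2q)^{1/3}$, $A^\delta(p,q)=\operatorname{sgn}(q)\min(\lvert A(p,q)\rvert,K\lvert p\rvert,L\lvert q\rvert)$ ($\operatorname{sgn}(0)=0$), $A^{\delta,\pm}(p,q)=A^\delta(p^\pm,q^\pm)$ where $x^+=\max(x,0)$, $x^-=\min(x,0)$, the scheme on the uniform grid of spacing $h$ is $-F^{1D,e,\delta}[u]=A^{\delta,+}(\lvert u_x^h\rvert^+,-u_{xx}^h)+A^{\delta,-}(-\lvert u_x^h\rvert^-,-u_{xx}^h)$, where $\lvert u_x^h\rvert^+=\max\{\frac{u(x)-u(x+h)}h,\frac{u(x)-u(x-h)}h,0\}$, $-\lvert u_x^h\rvert^-=\min\{\frac{u(x)-u(x+h)}h,\frac{u(x)-u(x-h)}h,0\}$, $u_{xx}^h=\frac{u(x+h)-2u(x)+u(x-h)}{h^2}$. Writing a finite difference operator as $F^h[u](x)=F^h(x,u(x),u(x)-u(\cdot))$, it is Lipschitz continuous with constant $C$ if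 $\lvert F^h(x,r,v(\cdot))-F^h(x,s,w(\cdot))\rvert\le C\max(\lvert r-s\rvert,\lVert v-w\rVert_\infty)$ for all grid points $x$. Consistency with $F$ means $\lim_{h\to0,\,y\to x}F^h[\phi](y)=F[\phi](x)$ for smooth $\phi$. *)

From Stdlib Require Import Reals Lra.
From Coquelicot Require Import Coquelicot.
Open Scope R_scope.

Definition cbrt (x : R) : R :=
  if Rlt_dec 0 x then Rpower x (1/3)
  else if Rlt_dec x 0 then - Rpower (- x) (1/3) else 0.

Definition sgn (x : R) : R :=
  if Rlt_dec 0 x then 1 else if Rlt_dec x 0 then -1 else 0.

Definition posp (x : R) : R := Rmax x 0.
Definition negp (x : R) : R := Rmin x 0.

Definition Aop (p q : R) : R := cbrt (p ^ 2 * q).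

Definition Adelta (K L p q : R) : R :=
  sgn q * Rmin (Rabs (Aop p q)) (Rmin (K * Rabs p) (L * Rabs q)).

Definition Adelta_p (K L p q : R) : R := Adelta K L (posp p) (posp q).
Definition Adelta_m (K L p q : R) : R := Adelta K L (negp p) (negp q).

(* The scheme written in the form F^h(x, r, v(.)) where, applied to u,
   r = u(x) and v(y) = u(x) - u(y). *)
(* (u(x)-u(x+h))/h and (u(x)-u(x-h))/h *)
Definition Dfwd (h x : R) (v : R -> R) : R := v (x + h) / h.
Definition Dbwd (h x : R) (v : R -> R) : R := v (x - h) / h.
Definition uxPlus (h x : R) (v : R -> R) : R :=
  Rmax (Rmax (Dfwd h x v) (Dbwd h x v)) 0.
Definition uxMinusNeg (h x : R) (v : R -> R) : R :=
  Rmin (Rmin (Dfwd h x v) (Dbwd h x v)) 0.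
(* u_xx^h = (u(x+h) - 2u(x) + u(x-h))/h^2 = -(v(x+h) + v(x-h))/h^2 *)
Definition uxx (h x : R) (v : R -> R) : R := - (v (x + h) + v (x - h)) / h ^ 2.

Definition F1De_op (K L h x r : R) (v : R -> R) : R :=
  - (Adelta_p K L (uxPlus h x v) (- uxx h x v)
     + Adelta_m K L (uxMinusNeg h x v) (- uxx h x v)).

Definition Kh (h : R) : R := Rpower h (- (1/3)).
Definition Lh (h : R) : R := Rpower h (- (4/3)).

Definition F1De (h : R) (u : R -> R) (x : R) : R :=
  F1De_op (Kh h) (Lh h) h x (u x) (fun y => u x - u y).

Definition F1D (u : R -> R) (x : R) : R :=
  cbrt ((Derive u x) ^ 2 * Derive_n u 2 x).

Definition on_lattice (h y : R) : Prop := exists k : Z, y = -1 + IZR k * h.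
Definition grid_point (h x : R) : Prop := -1 < x < 1 /\ on_lattice h x.

Definition Ch (h : R) : R := Rpower h (- (4/3)) + 2 * Rpower h (- (10/3)).

(* With e = h^(1/3) one has h = e^3, K = 1/e and L = 1/e^4.  In the variables
   s = |p|^(1/3), t = |q|^(1/3) the truncated operator is |A^delta(p,q)| =
   min(s^2 t, s^3/e, t^3/e^4), and s^2 t min-ed with K s^3 (resp. L t^3) is
   monotone with increments at most K (resp. L) times the increment of s^3
   (resp. t^3).  Hence A^delta is K-Lipschitz in |p| and L-Lipschitz in q, and
   since one-sided differences move by M/h and the second difference by 2M/h^2,
   the scheme is Lipschitz with constant K/h + 2L/h^2 = h^(-4/3) + 2h^(-10/3).
   The upwind selection matters here: at most one of the two terms is active,
   and when the active one switches, only the bound L|q| is used.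

   For accuracy, a^2 b <= a^3 + b^3 shows the truncation costs at most
   e^2 (s^3 + t^3).  For smooth phi the one-sided differences are O(h) from
   +-phi' and the second difference is O(h^2) from phi'', so s moves by O(e),
   s^2 by O(e^2) (as |x^2 - y^2|^3 <= |x^3 - y^3|^2) and t by O(e^2): the error
   is O(e^2) = O(h^(2/3)).  When the discrete and exact curvatures have opposite
   signs, both are O(h^2) and both sides are O(h^(2/3)).  Consistency then
   follows from accuracy and the continuity of F^1D[phi]. *)

From Stdlib Require Import Reals Lra Psatz.
From Coquelicot Require Import Coquelicot.
Open Scope R_scope.

(** * Cubes and the real cube root *)

Lemma cube_lt a b : a < b -> a ^ 3 < b ^ 3.
Proof.
  intros Hab.
  assert (Hsq : 0 < (b - a) ^ 2) by (apply pow_lt; lra).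
  assert (Hpos : 0 < (b - a) * (3 / 4 * (a + b) ^ 2 + 1 / 4 * (b - a) ^ 2)).
  { apply Rmult_lt_0_compat; [lra|]. pose proof (pow2_ge_0 (a + b)). lra. }
  replace (b ^ 3) with (a ^ 3 + (b - a) * (3 / 4 * (a + b) ^ 2 + 1 / 4 * (b - a) ^ 2))
    by field.
  lra.
Qed.

Lemma cube_le_inv a b : a ^ 3 <= b ^ 3 -> a <= b.
Proof. intros H. destruct (Rle_or_lt a b) as [|Hba]; [easy|]. apply cube_lt in Hba. lra. Qed.

Lemma cube_lt_inv a b : a ^ 3 < b ^ 3 -> a < b.
Proof.
  intros H. destruct (Rlt_or_le a b) as [|Hba]; [easy|].
  destruct (Rle_lt_or_eq_dec b a Hba) as [Hlt|<-]; [apply cube_lt in Hlt|]; lra.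
Qed.

Lemma cube_inj a b : a ^ 3 = b ^ 3 -> a = b.
Proof. intros H. apply Rle_antisym; apply cube_le_inv; lra. Qed.

Lemma Rpower_third_cube x : 0 < x -> Rpower x (1 / 3) ^ 3 = x.
Proof.
  intros Hx. rewrite <- Rpower_pow by apply exp_pos.
  rewrite Rpower_mult. replace (1 / 3 * INR 3) with 1 by (simpl; field).
  now apply Rpower_1.
Qed.

Lemma cbrt_cube x : cbrt x ^ 3 = x.
Proof.
  unfold cbrt. destruct (Rlt_dec 0 x); [now apply Rpower_third_cube|].
  destruct (Rlt_dec x 0).
  - replace ((- Rpower (- x) (1 / 3)) ^ 3) with (- Rpower (- x) (1 / 3) ^ 3) by ring.
    rewrite Rpower_third_cube; lra.
  - replace x with 0 by lra. ring.
Qed.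

Lemma cbrt_unique x y : y ^ 3 = x -> cbrt x = y.
Proof. intros H. apply cube_inj. now rewrite cbrt_cube. Qed.

Lemma cbrt_nonneg x : 0 <= x -> 0 <= cbrt x.
Proof. intros Hx. apply cube_le_inv. rewrite cbrt_cube. simpl. lra. Qed.

Lemma exists_cube_root h : 0 < h -> exists e, 0 < e /\ h = e ^ 3.
Proof.
  intros Hh. exists (cbrt h). rewrite cbrt_cube. split; [|easy].
  apply cube_lt_inv. rewrite cbrt_cube. simpl. lra.
Qed.

Lemma Rabs_sub_cube_le a b : Rabs (a - b) ^ 3 <= 4 * Rabs (a ^ 3 - b ^ 3).
Proof.
  replace (a ^ 3 - b ^ 3) with ((a - b) * (3 / 4 * (a + b) ^ 2 + 1 / 4 * (a - b) ^ 2))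
    by field.
  pose proof (pow2_ge_0 (a + b)). pose proof (pow2_ge_0 (a - b)).
  rewrite Rabs_mult, (Rabs_right (_ + _)) by lra.
  rewrite <- (pow2_abs (a - b)).
  pose proof (Rabs_pos (a - b)). pose proof (pow2_ge_0 (Rabs (a - b))).
  assert (0 <= Rabs (a - b) * (a + b) ^ 2) by (apply Rmult_le_pos; lra).
  nra.
Qed.

Lemma cbrt_holder u w : Rabs (cbrt u - cbrt w) ^ 3 <= 4 * Rabs (u - w).
Proof.
  rewrite <- (cbrt_cube u) at 2. rewrite <- (cbrt_cube w) at 2.
  apply Rabs_sub_cube_le.
Qed.

Lemma cbrt_continuous x : continuity_pt cbrt x.
Proof.
  intros eps Heps. exists (eps ^ 3 / 4).
  split; [apply Rdiv_lt_0_compat; [apply pow_lt|]; lra|].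
  intros y [_ Hy]. simpl in Hy |- *. unfold R_dist in *.
  apply cube_lt_inv.
  pose proof (cbrt_holder y x). lra.
Qed.

Lemma cube_sub_le_sub_cube x y : 0 <= x <= y -> (y - x) ^ 3 <= y ^ 3 - x ^ 3.
Proof.
  intros Hxy. assert (0 <= x * y * (y - x)) by (apply Rmult_le_pos; nra).
  replace (y ^ 3 - x ^ 3) with ((y - x) ^ 3 + 3 * (x * y * (y - x))) by ring. lra.
Qed.

Lemma cube_sub_sq_le_sq_sub_cube x y : 0 <= x <= y -> (y ^ 2 - x ^ 2) ^ 3 <= (y ^ 3 - x ^ 3) ^ 2.
Proof.
  intros Hxy. set (d := y - x).
  assert (0 <= d ^ 2 * (9 * x ^ 4 + 10 * x ^ 3 * d + 3 * x ^ 2 * d ^ 2)).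
  { assert (0 <= x ^ 3 * d) by (apply Rmult_le_pos; [apply pow_le|unfold d]; lra).
    pose proof (pow_le x 4 ltac:(lra)). pose proof (pow2_ge_0 (x * d)).
    apply Rmult_le_pos; [apply pow2_ge_0|nra]. }
  replace y with (x + d) by (unfold d; ring).
  replace ((x + d) ^ 3 - x ^ 3) with (d * (3 * x ^ 2 + 3 * x * d + d ^ 2)) by ring.
  nra.
Qed.

Lemma Rabs_sub_le_of_cube x y c : 0 <= x -> 0 <= y ->
  Rabs (x ^ 3 - y ^ 3) <= c ^ 3 -> Rabs (x - y) <= c.
Proof.
  intros Hx Hy H. apply cube_le_inv.
  destruct (Rle_dec x y).
  - pose proof (cube_sub_le_sub_cube x y ltac:(lra)).
    pose proof (pow_incr x y 3 ltac:(lra)).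
    rewrite Rabs_minus_sym in H |- *. rewrite Rabs_right in * by lra. lra.
  - pose proof (cube_sub_le_sub_cube y x ltac:(lra)).
    pose proof (pow_incr y x 3 ltac:(lra)).
    rewrite Rabs_right in * by lra. lra.
Qed.

Lemma Rabs_sub_sq_le_of_cube x y c : 0 <= x -> 0 <= y ->
  Rabs (x ^ 3 - y ^ 3) <= c ^ 3 -> Rabs (x ^ 2 - y ^ 2) <= c ^ 2.
Proof.
  assert (Hle : forall u v, 0 <= u <= v -> v ^ 3 - u ^ 3 <= c ^ 3 -> v ^ 2 - u ^ 2 <= c ^ 2).
  { intros u v Huv H. apply cube_le_inv.
    pose proof (cube_sub_sq_le_sq_sub_cube u v Huv). pose proof (pow_incr u v 3 Huv).
    assert ((v ^ 3 - u ^ 3) ^ 2 <= (c ^ 3) ^ 2) by (apply pow_incr; lra).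
    replace ((c ^ 2) ^ 3) with ((c ^ 3) ^ 2) by ring. lra. }
  intros Hx Hy H. apply Rabs_le_between in H. apply Rabs_le.
  destruct (Rle_dec x y).
  - pose proof (Hle x y ltac:(lra) ltac:(lra)). pose proof (pow_incr x y 2 ltac:(lra)). lra.
  - pose proof (Hle y x ltac:(lra) ltac:(lra)). pose proof (pow_incr y x 2 ltac:(lra)). lra.
Qed.

Lemma sq_mul_le_cube_add a b : 0 <= a -> 0 <= b -> a ^ 2 * b <= a ^ 3 + b ^ 3.
Proof.
  intros Ha Hb. pose proof (pow_le a 3 Ha). pose proof (pow_le b 3 Hb).
  destruct (Rle_dec a b).
  - assert (a ^ 2 <= b ^ 2) by (apply pow_incr; lra). nra.
  - nra.
Qed.

(** * Signs, minima and maxima *)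

Lemma sgn_mul_Rabs q : sgn q * Rabs q = q.
Proof.
  unfold sgn. destruct (Rlt_dec 0 q); [rewrite Rabs_right by lra; ring|].
  destruct (Rlt_dec q 0); [rewrite Rabs_left by lra; ring|]. lra.
Qed.

Lemma sgn_cube q : sgn q ^ 3 = sgn q.
Proof. unfold sgn. repeat destruct Rlt_dec; ring. Qed.

Lemma Rabs_sgn_le q : Rabs (sgn q) <= 1.
Proof.
  unfold sgn, Rabs. repeat destruct Rlt_dec; repeat destruct Rcase_abs; lra.
Qed.

Lemma sgn_same_sign q q' : 0 < q * q' -> sgn q' = sgn q /\ Rabs (sgn q) = 1.
Proof.
  intros H. unfold sgn, Rabs.
  repeat destruct Rlt_dec as [?|?%Rnot_lt_le]; repeat destruct Rcase_abs; split; try lra; nra.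
Qed.

Lemma Rabs_sgn_mul_sub q q' X X' : 0 < q * q' -> Rabs (sgn q * X - sgn q' * X') = Rabs (X - X').
Proof.
  intros H. destruct (sgn_same_sign q q' H) as [-> Hq].
  now rewrite <- Rmult_minus_distr_l, Rabs_mult, Hq, Rmult_1_l.
Qed.

Lemma Rabs_sgn_mul_sub_le q q' X X' : 0 <= X -> 0 <= X' ->
  Rabs (sgn q * X - sgn q' * X') <= X + X'.
Proof.
  intros HX HX'. unfold Rminus. eapply Rle_trans; [apply Rabs_triang|].
  rewrite Rabs_Ropp, !Rabs_mult, (Rabs_right X), (Rabs_right X') by lra.
  pose proof (Rabs_sgn_le q). pose proof (Rabs_sgn_le q'). pose proof (Rabs_pos (sgn q)).
  pose proof (Rabs_pos (sgn q')). nra.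
Qed.

Lemma Rabs_Ropp_sub_Ropp a b : Rabs (- a - - b) = Rabs (a - b).
Proof. rewrite <- Rabs_Ropp. f_equal. ring. Qed.

Lemma Rabs_sub_opposite_sign q q' : q * q' <= 0 -> Rabs q + Rabs q' = Rabs (q - q').
Proof. intros H. unfold Rabs. repeat destruct Rcase_abs; nra. Qed.

Lemma Rabs_Rmax_sub_le a b c d m : Rabs (a - c) <= m -> Rabs (b - d) <= m ->
  Rabs (Rmax a b - Rmax c d) <= m.
Proof.
  intros H1%Rabs_le_between H2%Rabs_le_between. apply Rabs_le.
  unfold Rmax. repeat destruct Rle_dec; lra.
Qed.

Lemma Rabs_Rmin_sub_le a b c d m : Rabs (a - c) <= m -> Rabs (b - d) <= m ->
  Rabs (Rmin a b - Rmin c d) <= m.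
Proof.
  intros H1%Rabs_le_between H2%Rabs_le_between. apply Rabs_le.
  unfold Rmin. repeat destruct Rle_dec; lra.
Qed.

Lemma Rabs_div_sub_le a b h M : 0 < h -> Rabs (a - b) <= M -> Rabs (a / h - b / h) <= M / h.
Proof.
  intros Hh H. replace (a / h - b / h) with ((a - b) / h) by (field; lra).
  rewrite Rabs_div, (Rabs_right h) by lra.
  apply Rmult_le_compat_r; [apply Rlt_le, Rinv_0_lt_compat|]; lra.
Qed.

Lemma Rmult_Rmin_distr_l a b c : 0 <= a -> a * Rmin b c = Rmin (a * b) (a * c).
Proof.
  intros Ha. unfold Rmin.
  destruct (Rle_dec b c) as [Hbc|Hbc]; destruct (Rle_dec (a * b) (a * c)) as [Habc|Habc];
    try easy.
  - exfalso. apply Habc, Rmult_le_compat_l; lra.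
  - apply Rle_antisym; [|lra]. apply Rmult_le_compat_l; lra.
Qed.

Lemma Rmin_sub_le a b c : b <= a -> 0 <= Rmin c a - Rmin c b <= a - b.
Proof. intros H. unfold Rmin. repeat destruct Rle_dec; lra. Qed.

Lemma pow_mul_Rmin_incr (k j : nat) c K x y : 0 <= c -> 0 <= K -> 0 <= x <= y ->
  0 <= y ^ k * Rmin c (K * y ^ j) - x ^ k * Rmin c (K * x ^ j)
    <= K * (y ^ (k + j) - x ^ (k + j)).
Proof.
  intros Hc HK Hxy.
  assert (Hk : 0 <= x ^ k <= y ^ k) by (split; [apply pow_le|apply pow_incr]; lra).
  assert (Hj : K * x ^ j <= K * y ^ j) by (apply Rmult_le_compat_l, pow_incr; lra).
  pose proof (Rmin_sub_le _ _ c Hj) as Hmin.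
  assert (Hmy : 0 <= Rmin c (K * y ^ j) <= K * y ^ j).
  { split; [apply Rmin_glb; [easy|apply Rmult_le_pos, pow_le; lra]|apply Rmin_r]. }
  rewrite !pow_add.
  split; [nra|].
  apply Rle_trans with ((y ^ k - x ^ k) * (K * y ^ j) + x ^ k * (K * (y ^ j - x ^ j))); [nra|].
  right. ring.
Qed.

Lemma pow_mul_Rmin_lipschitz (k j : nat) c K x y : 0 <= c -> 0 <= K -> 0 <= x -> 0 <= y ->
  Rabs (x ^ k * Rmin c (K * x ^ j) - y ^ k * Rmin c (K * y ^ j))
    <= K * Rabs (x ^ (k + j) - y ^ (k + j)).
Proof.
  intros Hc HK Hx Hy. destruct (Rle_dec x y).
  - pose proof (pow_mul_Rmin_incr k j c K x y Hc HK ltac:(lra)).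
    pose proof (pow_incr x y (k + j) ltac:(lra)).
    rewrite Rabs_minus_sym, (Rabs_minus_sym (x ^ _)), !Rabs_right by lra. lra.
  - pose proof (pow_mul_Rmin_incr k j c K y x Hc HK ltac:(lra)).
    pose proof (pow_incr y x (k + j) ltac:(lra)).
    rewrite !Rabs_right by lra. lra.
Qed.

(** * The truncated operator A^delta *)

Lemma Aop_cbrtE p q : Aop p q = sgn q * (cbrt (Rabs p) ^ 2 * cbrt (Rabs q)).
Proof.
  apply cbrt_unique.
  replace ((sgn q * (cbrt (Rabs p) ^ 2 * cbrt (Rabs q))) ^ 3)
    with (sgn q ^ 3 * (cbrt (Rabs p) ^ 3) ^ 2 * cbrt (Rabs q) ^ 3) by ring.
  rewrite sgn_cube, !cbrt_cube, pow2_abs.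
  rewrite <- (sgn_mul_Rabs q) at 3. ring.
Qed.

Lemma Rabs_Aop p q : Rabs (Aop p q) = cbrt (Rabs p) ^ 2 * cbrt (Rabs q).
Proof.
  apply cube_inj. rewrite RPow_abs.
  replace ((cbrt (Rabs p) ^ 2 * cbrt (Rabs q)) ^ 3)
    with ((cbrt (Rabs p) ^ 3) ^ 2 * cbrt (Rabs q) ^ 3) by ring.
  unfold Aop. rewrite !cbrt_cube, pow2_abs, Rabs_mult.
  now rewrite (Rabs_right (p ^ 2)) by (apply Rle_ge, pow2_ge_0).
Qed.

Lemma Aop_opp_r p q : Aop p (- q) = - Aop p q.
Proof.
  apply cbrt_unique. replace ((- Aop p q) ^ 3) with (- Aop p q ^ 3) by ring.
  unfold Aop. rewrite cbrt_cube. ring.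
Qed.

(* [|A^delta(p, q)|] in the coordinates [s = |p|^(1/3)], [t = |q|^(1/3)], where the
   three branches of the minimum become monomials. *)
Definition Adelta_cbrt (K L s t : R) : R := Rmin (s ^ 2 * t) (Rmin (K * s ^ 3) (L * t ^ 3)).

Lemma Adelta_cbrtE K L p q :
  Adelta K L p q = sgn q * Adelta_cbrt K L (cbrt (Rabs p)) (cbrt (Rabs q)).
Proof. unfold Adelta, Adelta_cbrt. now rewrite Rabs_Aop, !cbrt_cube. Qed.

Lemma Adelta_0_r K L p : Adelta K L p 0 = 0.
Proof. unfold Adelta, sgn. repeat destruct Rlt_dec; lra. Qed.

Lemma Adelta_cbrt_bounds K L s t : 0 <= K -> 0 <= L -> 0 <= s -> 0 <= t ->
  0 <= Adelta_cbrt K L s t <= s ^ 2 * t.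
Proof.
  intros HK HL Hs Ht. unfold Adelta_cbrt. split; [|apply Rmin_l].
  pose proof (pow_le s 3 Hs). pose proof (pow_le t 3 Ht). pose proof (pow2_ge_0 s).
  repeat apply Rmin_glb; apply Rmult_le_pos; lra.
Qed.

Lemma Adelta_cbrt_lipschitz K L s t s' t' : 0 <= K -> 0 <= L ->
  0 <= s -> 0 <= t -> 0 <= s' -> 0 <= t' ->
  Rabs (Adelta_cbrt K L s t - Adelta_cbrt K L s' t')
    <= K * Rabs (s ^ 3 - s' ^ 3) + L * Rabs (t ^ 3 - t' ^ 3).
Proof.
  intros HK HL Hs Ht Hs' Ht'.
  assert (Es : forall x y, 0 <= x ->
            Adelta_cbrt K L x y = Rmin (x ^ 2 * Rmin y (K * x ^ 1)) (L * y ^ 3)).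
  { intros x y Hx. unfold Adelta_cbrt. rewrite Rmult_Rmin_distr_l by apply pow2_ge_0.
    unfold Rmin. repeat destruct Rle_dec; ring_simplify; lra. }
  assert (Et : forall x y, 0 <= y ->
            Adelta_cbrt K L x y = Rmin (y ^ 1 * Rmin (x ^ 2) (L * y ^ 2)) (K * x ^ 3)).
  { intros x y Hy. unfold Adelta_cbrt. rewrite Rmult_Rmin_distr_l by lra.
    unfold Rmin. repeat destruct Rle_dec; ring_simplify; lra. }
  replace (Adelta_cbrt K L s t - Adelta_cbrt K L s' t')
    with ((Adelta_cbrt K L s t - Adelta_cbrt K L s' t)
          + (Adelta_cbrt K L s' t - Adelta_cbrt K L s' t')) by ring.
  eapply Rle_trans; [apply Rabs_triang|]. apply Rplus_le_compat.
  - rewrite !Es by lra. apply Rabs_Rmin_sub_le; [now apply (pow_mul_Rmin_lipschitz 2 1)|].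
    rewrite Rminus_diag, Rabs_R0. apply Rmult_le_pos; [easy|apply Rabs_pos].
  - rewrite !Et by lra. apply Rabs_Rmin_sub_le.
    + apply (pow_mul_Rmin_lipschitz 1 2); try lra. apply pow2_ge_0.
    + rewrite Rminus_diag, Rabs_R0. apply Rmult_le_pos; [easy|apply Rabs_pos].
Qed.

Lemma Adelta_cbrt_truncation e s t : 0 < e -> 0 <= s -> 0 <= t ->
  s ^ 2 * t - Adelta_cbrt (/ e) (/ e ^ 4) s t <= e ^ 2 * (s ^ 3 + t ^ 3).
Proof.
  intros He Hs Ht.
  assert (He4 : 0 < e ^ 4) by (apply pow_lt; lra).
  pose proof (pow_le s 3 Hs). pose proof (pow_le t 3 Ht). pose proof (pow2_ge_0 e).
  assert (Hst : s ^ 2 * t <= e ^ 2 * t ^ 3 + / e * s ^ 3).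
  { pose proof (sq_mul_le_cube_add s (e * t) Hs ltac:(nra)).
    apply (Rmult_le_reg_l e); [easy|].
    replace (e * (e ^ 2 * t ^ 3 + / e * s ^ 3)) with ((e * t) ^ 3 + s ^ 3) by (field; lra).
    nra. }
  assert (Hts : s ^ 2 * t <= e ^ 2 * s ^ 3 + / e ^ 4 * t ^ 3).
  { pose proof (sq_mul_le_cube_add (e ^ 2 * s) t ltac:(nra) Ht).
    apply (Rmult_le_reg_l (e ^ 4)); [easy|].
    replace (e ^ 4 * (e ^ 2 * s ^ 3 + / e ^ 4 * t ^ 3)) with ((e ^ 2 * s) ^ 3 + t ^ 3)
      by (field; lra).
    nra. }
  unfold Adelta_cbrt, Rmin. repeat destruct Rle_dec; nra.
Qed.

Lemma Adelta_cbrt_approx e m s t s' t' : 0 < e <= 1 ->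
  0 <= s <= m -> 0 <= t <= m -> 0 <= s' <= 2 * m -> 0 <= t' <= 2 * m ->
  Rabs (s' ^ 2 - s ^ 2) <= (m * e) ^ 2 -> Rabs (t' - t) <= m * e ^ 2 ->
  Rabs (Adelta_cbrt (/ e) (/ e ^ 4) s' t' - s ^ 2 * t) <= 19 * m ^ 3 * e ^ 2.
Proof.
  intros He Hs Ht Hs' Ht' Hsq Htt.
  assert (HK : 0 <= / e) by (apply Rlt_le, Rinv_0_lt_compat; lra).
  assert (HL : 0 <= / e ^ 4) by (apply Rlt_le, Rinv_0_lt_compat, pow_lt; lra).
  pose proof (Adelta_cbrt_bounds _ _ s' t' HK HL ltac:(lra) ltac:(lra)) as Hb.
  pose proof (Adelta_cbrt_truncation e s' t' ltac:(lra) ltac:(lra) ltac:(lra)) as Htr.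
  assert (Hcubes : s' ^ 3 + t' ^ 3 <= 16 * m ^ 3).
  { pose proof (pow_incr s' (2 * m) 3 ltac:(lra)). pose proof (pow_incr t' (2 * m) 3 ltac:(lra)).
    lra. }
  assert (Hpert : Rabs (s' ^ 2 * t' - s ^ 2 * t) <= 3 * m ^ 3 * e ^ 2).
  { replace (s' ^ 2 * t' - s ^ 2 * t) with ((s' ^ 2 - s ^ 2) * t' + s ^ 2 * (t' - t)) by ring.
    eapply Rle_trans; [apply Rabs_triang|]. rewrite !Rabs_mult, (Rabs_right t'),
      (Rabs_right (s ^ 2)) by (apply Rle_ge; try apply pow2_ge_0; lra).
    pose proof (pow_incr s m 2 ltac:(lra)). pose proof (pow2_ge_0 s).
    pose proof (Rabs_pos (s' ^ 2 - s ^ 2)). pose proof (Rabs_pos (t' - t)).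
    assert (Rabs (s' ^ 2 - s ^ 2) * t' <= (m * e) ^ 2 * (2 * m)) by (apply Rmult_le_compat; lra).
    assert (s ^ 2 * Rabs (t' - t) <= m ^ 2 * (m * e ^ 2)) by (apply Rmult_le_compat; lra).
    nra. }
  replace (Adelta_cbrt (/ e) (/ e ^ 4) s' t' - s ^ 2 * t)
    with (- (s' ^ 2 * t' - Adelta_cbrt (/ e) (/ e ^ 4) s' t') + (s' ^ 2 * t' - s ^ 2 * t)) by ring.
  eapply Rle_trans; [apply Rabs_triang|]. rewrite Rabs_Ropp, Rabs_right by lra.
  assert (e ^ 2 * (s' ^ 3 + t' ^ 3) <= e ^ 2 * (16 * m ^ 3))
    by (apply Rmult_le_compat_l; [apply pow2_ge_0|easy]).
  lra.
Qed.

Lemma Adelta_cbrt_small e m s t s' t' : 0 < e <= 1 ->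
  0 <= s <= m -> 0 <= s' <= 2 * m -> 0 <= t -> 0 <= t' ->
  t' ^ 3 + t ^ 3 <= (m * e ^ 2) ^ 3 ->
  Adelta_cbrt (/ e) (/ e ^ 4) s' t' + s ^ 2 * t <= 19 * m ^ 3 * e ^ 2.
Proof.
  intros He Hs Hs' Ht Ht' Hsmall.
  pose proof (pow_le t 3 Ht). pose proof (pow_le t' 3 Ht').
  assert (Ht'e : t' <= m * e ^ 2) by (apply cube_le_inv; lra).
  assert (Hte : t <= m * e ^ 2) by (apply cube_le_inv; lra).
  assert (HK : 0 <= / e) by (apply Rlt_le, Rinv_0_lt_compat; lra).
  assert (HL : 0 <= / e ^ 4) by (apply Rlt_le, Rinv_0_lt_compat, pow_lt; lra).
  pose proof (Adelta_cbrt_bounds _ _ s' t' HK HL ltac:(lra) Ht').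
  assert (s' ^ 2 * t' <= (2 * m) ^ 2 * (m * e ^ 2)).
  { apply Rmult_le_compat; try lra; [apply pow2_ge_0|apply pow_incr; lra]. }
  assert (s ^ 2 * t <= m ^ 2 * (m * e ^ 2)).
  { apply Rmult_le_compat; try lra; [apply pow2_ge_0|apply pow_incr; lra]. }
  pose proof (Rmult_le_pos _ _ (pow_le m 3 ltac:(lra)) (pow2_ge_0 e)). nra.
Qed.

Lemma Rabs_Adelta_le K L p q : 0 <= K -> 0 <= L -> Rabs (Adelta K L p q) <= L * Rabs q.
Proof.
  intros HK HL. unfold Adelta. rewrite Rabs_mult.
  assert (Hm : 0 <= Rmin (Rabs (Aop p q)) (Rmin (K * Rabs p) (L * Rabs q)) <= L * Rabs q).
  { pose proof (Rabs_pos p). pose proof (Rabs_pos q). pose proof (Rabs_pos (Aop p q)).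
    split; [repeat apply Rmin_glb; nra|].
    eapply Rle_trans; [apply Rmin_r|apply Rmin_r]. }
  rewrite (Rabs_right (Rmin _ _)) by lra.
  pose proof (Rabs_sgn_le q). pose proof (Rabs_pos (sgn q)). nra.
Qed.

(* Used where the curvature changes sign and the scheme switches between the two
   one-sided gradients, which need not be close to each other. *)
Lemma Adelta_lipschitz_opposite_sign K L p q p' q' : 0 <= K -> 0 <= L -> q * q' <= 0 ->
  Rabs (Adelta K L p q - Adelta K L p' q') <= L * Rabs (q - q').
Proof.
  intros HK HL Hqq. rewrite <- (Rabs_sub_opposite_sign q q') by easy.
  unfold Rminus. eapply Rle_trans; [apply Rabs_triang|]. rewrite Rabs_Ropp.
  pose proof (Rabs_Adelta_le K L p q HK HL). pose proof (Rabs_Adelta_le K L p' q' HK HL).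
  lra.
Qed.

Lemma Adelta_lipschitz K L p q p' q' : 0 <= K -> 0 <= L ->
  Rabs (Adelta K L p q - Adelta K L p' q') <= K * Rabs (Rabs p - Rabs p') + L * Rabs (q - q').
Proof.
  intros HK HL.
  pose proof (Rmult_le_pos _ _ HK (Rabs_pos (Rabs p - Rabs p'))).
  destruct (Rle_or_lt (q * q') 0) as [Hqq|Hqq].
  - pose proof (Adelta_lipschitz_opposite_sign K L p q p' q' HK HL Hqq). lra.
  - rewrite !Adelta_cbrtE, Rabs_sgn_mul_sub by easy.
    eapply Rle_trans; [apply Adelta_cbrt_lipschitz; auto; apply cbrt_nonneg, Rabs_pos|].
    rewrite !cbrt_cube. apply Rplus_le_compat_l, Rmult_le_compat_l; [easy|].
    apply Rabs_triang_inv2.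
Qed.

Lemma Adelta_approx e B p q p' q' : 0 < e <= 1 -> Rabs p <= B -> Rabs q <= B ->
  Rabs (Rabs p' - Rabs p) <= B * e ^ 3 -> Rabs (q' - q) <= B * e ^ 6 ->
  Rabs (Adelta (/ e) (/ e ^ 4) p' q' - Aop p q) <= 19 * B * e ^ 2.
Proof.
  intros He Hp Hq Hpp Hqq.
  assert (HB : 0 <= B) by (pose proof (Rabs_pos p); lra).
  pose proof (cbrt_nonneg B HB) as Hm. pose proof (cbrt_cube B) as Em.
  pose proof (cbrt_cube (Rabs p)) as Es. pose proof (cbrt_cube (Rabs q)) as Et.
  pose proof (cbrt_cube (Rabs p')) as Es'. pose proof (cbrt_cube (Rabs q')) as Et'.
  pose proof (cbrt_nonneg _ (Rabs_pos p)) as Hs. pose proof (cbrt_nonneg _ (Rabs_pos q)) as Ht.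
  pose proof (cbrt_nonneg _ (Rabs_pos p')) as Hs'. pose proof (cbrt_nonneg _ (Rabs_pos q')) as Ht'.
  rewrite Adelta_cbrtE, Aop_cbrtE, <- Em.
  set (m := cbrt B) in *.
  set (s := cbrt (Rabs p)) in *. set (t := cbrt (Rabs q)) in *.
  set (s' := cbrt (Rabs p')) in *. set (t' := cbrt (Rabs q')) in *.
  assert (Hsm : s <= m) by (apply cube_le_inv; lra).
  assert (Htm : t <= m) by (apply cube_le_inv; lra).
  assert (Hds : Rabs (s' ^ 3 - s ^ 3) <= (m * e) ^ 3) by (now rewrite Es, Es', Rpow_mult_distr, Em).
  pose proof (Rabs_sub_le_of_cube s' s (m * e) Hs' Hs Hds) as Hs's%Rabs_le_between.
  assert (Hs'm : s' <= 2 * m) by nra.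
  destruct (Rle_or_lt (q' * q) 0) as [Hsign|Hsign].
  - assert (HK : 0 <= / e) by (apply Rlt_le, Rinv_0_lt_compat; lra).
    assert (HL : 0 <= / e ^ 4) by (apply Rlt_le, Rinv_0_lt_compat, pow_lt; lra).
    pose proof (Adelta_cbrt_bounds _ _ s' t' HK HL Hs' Ht').
    pose proof (Rmult_le_pos _ _ (pow2_ge_0 s) Ht).
    eapply Rle_trans; [apply Rabs_sgn_mul_sub_le; lra|].
    apply Adelta_cbrt_small; try lra.
    rewrite Et, Et', Rabs_sub_opposite_sign, Rpow_mult_distr, <- pow_mult, Em by easy.
    simpl (2 * 3)%nat. lra.
  - assert (Hdt : Rabs (t' ^ 3 - t ^ 3) <= (m * e ^ 2) ^ 3).
    { rewrite Et, Et', Rpow_mult_distr, <- pow_mult, Em.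
      pose proof (Rabs_triang_inv2 q' q). simpl (2 * 3)%nat. lra. }
    pose proof (Rabs_sub_le_of_cube t' t (m * e ^ 2) Ht' Ht Hdt) as Ht't.
    assert (Ht'm : t' <= 2 * m).
    { apply Rabs_le_between in Ht't. pose proof (pow_incr e 1 2 ltac:(lra)). nra. }
    rewrite Rabs_sgn_mul_sub by easy.
    apply Adelta_cbrt_approx; try lra. now apply Rabs_sub_sq_le_of_cube.
Qed.

(** * The scheme *)

Lemma F1De_op_uxx_nonpos K L h x r v : uxx h x v <= 0 ->
  F1De_op K L h x r v = - Adelta K L (uxPlus h x v) (- uxx h x v).
Proof.
  intros H. unfold F1De_op, Adelta_p, Adelta_m, posp, negp.
  rewrite (Rmax_left (uxPlus _ _ _)) by apply Rmax_r.
  rewrite (Rmax_left (- _)), (Rmin_right (- _)), Adelta_0_r by lra. ring.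
Qed.

Lemma F1De_op_uxx_nonneg K L h x r v : 0 <= uxx h x v ->
  F1De_op K L h x r v = - Adelta K L (uxMinusNeg h x v) (- uxx h x v).
Proof.
  intros H. unfold F1De_op, Adelta_p, Adelta_m, posp, negp.
  rewrite (Rmin_left (uxMinusNeg _ _ _)) by apply Rmin_r.
  rewrite (Rmax_right (- _)), (Rmin_left (- _)), Adelta_0_r by lra. ring.
Qed.

Lemma F1De_op_lipschitz K L h x r s v w d1 d2 : 0 <= K -> 0 <= L ->
  Rabs (uxPlus h x v - uxPlus h x w) <= d1 ->
  Rabs (uxMinusNeg h x v - uxMinusNeg h x w) <= d1 ->
  Rabs (uxx h x v - uxx h x w) <= d2 ->
  Rabs (F1De_op K L h x r v - F1De_op K L h x s w) <= K * d1 + L * d2.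
Proof.
  intros HK HL HP HN HQ.
  assert (Hd1 : 0 <= K * d1) by (apply Rmult_le_pos; [|eapply Rle_trans; [apply Rabs_pos|]]; eauto).
  assert (HQ' : L * Rabs (- uxx h x v - - uxx h x w) <= L * d2).
  { apply Rmult_le_compat_l; [easy|]. now rewrite Rabs_Ropp_sub_Ropp. }
  assert (Hp : forall p p', Rabs (p - p') <= d1 -> K * Rabs (Rabs p - Rabs p') <= K * d1).
  { intros p p' Hpp. apply Rmult_le_compat_l; [easy|].
    eapply Rle_trans; [apply Rabs_triang_inv2|easy]. }
  destruct (Rle_dec (uxx h x v) 0) as [Hv|Hv]; destruct (Rle_dec (uxx h x w) 0) as [Hw|Hw].
  - rewrite !F1De_op_uxx_nonpos, Rabs_Ropp_sub_Ropp by easy.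
    eapply Rle_trans; [apply Adelta_lipschitz; easy|]. specialize (Hp _ _ HP). lra.
  - rewrite F1De_op_uxx_nonpos, F1De_op_uxx_nonneg, Rabs_Ropp_sub_Ropp by lra.
    eapply Rle_trans; [apply Adelta_lipschitz_opposite_sign; try easy; nra|]. lra.
  - rewrite F1De_op_uxx_nonneg, F1De_op_uxx_nonpos, Rabs_Ropp_sub_Ropp by lra.
    eapply Rle_trans; [apply Adelta_lipschitz_opposite_sign; try easy; nra|]. lra.
  - rewrite !F1De_op_uxx_nonneg, Rabs_Ropp_sub_Ropp by lra.
    eapply Rle_trans; [apply Adelta_lipschitz; easy|]. specialize (Hp _ _ HN). lra.
Qed.

Section DifferenceIncrements.

Variables (h x M : R) (v w : R -> R).
Hypothesis Hh : 0 < h.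
Hypothesis Hfwd : Rabs (v (x + h) - w (x + h)) <= M.
Hypothesis Hbwd : Rabs (v (x - h) - w (x - h)) <= M.

Lemma uxPlus_sub_le : Rabs (uxPlus h x v - uxPlus h x w) <= M / h.
Proof.
  assert (HM : 0 <= M / h).
  { apply Rdiv_le_0_compat; [eapply Rle_trans; [apply Rabs_pos|apply Hfwd]|easy]. }
  unfold uxPlus, Dfwd, Dbwd.
  repeat apply Rabs_Rmax_sub_le; try now apply Rabs_div_sub_le.
  now rewrite Rminus_0_r, Rabs_R0.
Qed.

Lemma uxMinusNeg_sub_le : Rabs (uxMinusNeg h x v - uxMinusNeg h x w) <= M / h.
Proof.
  assert (HM : 0 <= M / h).
  { apply Rdiv_le_0_compat; [eapply Rle_trans; [apply Rabs_pos|apply Hfwd]|easy]. }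
  unfold uxMinusNeg, Dfwd, Dbwd.
  repeat apply Rabs_Rmin_sub_le; try now apply Rabs_div_sub_le.
  now rewrite Rminus_0_r, Rabs_R0.
Qed.

Lemma uxx_sub_le : Rabs (uxx h x v - uxx h x w) <= 2 * M / h ^ 2.
Proof.
  unfold uxx. apply Rabs_div_sub_le; [now apply pow_lt|].
  replace (- (v (x + h) + v (x - h)) - - (w (x + h) + w (x - h)))
    with (- ((v (x + h) - w (x + h)) + (v (x - h) - w (x - h)))) by ring.
  rewrite Rabs_Ropp. eapply Rle_trans; [apply Rabs_triang|lra].
Qed.

End DifferenceIncrements.

Lemma Rabs_uxPlus_approx h x v p c :
  Rabs (Dfwd h x v + p) <= c -> Rabs (Dbwd h x v - p) <= c ->
  Rabs (Rabs (uxPlus h x v) - Rabs p) <= c.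
Proof.
  unfold uxPlus. intros H1%Rabs_le_between H2%Rabs_le_between. apply Rabs_le.
  unfold Rmax, Rabs. repeat destruct Rle_dec; repeat destruct Rcase_abs; lra.
Qed.

Lemma Rabs_uxMinusNeg_approx h x v p c :
  Rabs (Dfwd h x v + p) <= c -> Rabs (Dbwd h x v - p) <= c ->
  Rabs (Rabs (uxMinusNeg h x v) - Rabs p) <= c.
Proof.
  unfold uxMinusNeg. intros H1%Rabs_le_between H2%Rabs_le_between. apply Rabs_le.
  unfold Rmin, Rabs. repeat destruct Rle_dec; repeat destruct Rcase_abs; lra.
Qed.

Lemma F1De_op_approx e x r v p q B : 0 < e <= 1 -> Rabs p <= B -> Rabs q <= B ->
  Rabs (Dfwd (e ^ 3) x v + p) <= B * e ^ 3 -> Rabs (Dbwd (e ^ 3) x v - p) <= B * e ^ 3 ->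
  Rabs (uxx (e ^ 3) x v - q) <= B * e ^ 6 ->
  Rabs (F1De_op (/ e) (/ e ^ 4) (e ^ 3) x r v - Aop p q) <= 19 * B * e ^ 2.
Proof.
  intros He Hp Hq Hf Hb Hxx.
  assert (Hq' : Rabs (- q) <= B) by now rewrite Rabs_Ropp.
  assert (Hxx' : Rabs (- uxx (e ^ 3) x v - - q) <= B * e ^ 6)
    by now rewrite Rabs_Ropp_sub_Ropp.
  rewrite <- (Ropp_involutive q), Aop_opp_r.
  destruct (Rle_dec (uxx (e ^ 3) x v) 0).
  - rewrite F1De_op_uxx_nonpos, Rabs_Ropp_sub_Ropp by easy.
    apply Adelta_approx; try easy. now apply Rabs_uxPlus_approx.
  - rewrite F1De_op_uxx_nonneg, Rabs_Ropp_sub_Ropp by lra.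
    apply Adelta_approx; try easy. now apply Rabs_uxMinusNeg_approx.
Qed.

(** * Smooth test functions *)

Section SmoothFunction.

Variables (phi : R -> R) (a b : R).
Hypothesis phi_smooth : forall (n : nat) (x : R), a < x < b -> ex_derive_n phi n x.

Lemma locally_in_interval z : a < z < b -> locally z (fun y => a < y < b).
Proof.
  intros Hz. apply (open_and (fun y => a < y) (fun y => y < b)); [apply open_gt|apply open_lt|easy].
Qed.

Lemma Derive_n_continuous k y : a < y < b -> continuous (Derive_n phi k) y.
Proof. intros Hy. exact (ex_derive_continuous (Derive_n phi k) y (phi_smooth (S k) y Hy)). Qed.

Lemma F1D_continuous x : a < x < b -> continuity_pt (F1D phi) x.
Proof.
  intros Hx. apply continuity_pt_filterlim. unfold F1D.
  apply (continuous_comp (fun y => Derive phi y ^ 2 * Derive_n phi 2 y) cbrt).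
  - apply (continuous_mult (fun y => Derive phi y ^ 2)); [|now apply Derive_n_continuous].
    apply (continuous_mult (Derive phi)); [now apply (Derive_n_continuous 1)|].
    apply (continuous_mult (Derive phi)); [now apply (Derive_n_continuous 1)|].
    apply continuous_const.
  - apply continuity_pt_filterlim, cbrt_continuous.
Qed.

Lemma Derive_n_bounded n c d : a < c -> d < b -> c <= d ->
  exists B, 0 < B /\ forall k y, (k <= n)%nat -> c <= y <= d -> Rabs (Derive_n phi k y) <= B.
Proof.
  intros Hc Hd Hcd.
  assert (Hmax : forall k, exists z, forall y, c <= y <= d ->
                   Rabs (Derive_n phi k y) <= Rabs (Derive_n phi k z)).
  { intros k.
    destruct (continuity_ab_maj (fun y => Rabs (Derive_n phi k y)) c d Hcd) as [z [Hz _]];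
      [|now exists z].
    intros y Hy. apply continuity_pt_filterlim, continuous_Rabs_comp, Derive_n_continuous. lra. }
  induction n as [|n [B [HB IH]]].
  - destruct (Hmax 0%nat) as [z Hz]. exists (Rabs (Derive_n phi 0 z) + 1).
    split; [pose proof (Rabs_pos (Derive_n phi 0 z)); lra|].
    intros k y Hk Hy. apply Nat.le_0_r in Hk. subst k. specialize (Hz y Hy). lra.
  - destruct (Hmax (S n)) as [z Hz]. exists (B + Rabs (Derive_n phi (S n) z)).
    split; [pose proof (Rabs_pos (Derive_n phi (S n) z)); lra|].
    intros k y Hk Hy. destruct (Nat.le_gt_cases k n) as [Hkn|Hkn].
    + specialize (IH k y Hkn Hy). pose proof (Rabs_pos (Derive_n phi (S n) z)). lra.
    + replace k with (S n) by lia. specialize (Hz y Hy). lra.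
Qed.

(* Coquelicot's [Taylor_Lagrange] needs [x < y]; the case [y < x] goes through
   [t |-> phi (- t)]. *)
Lemma taylor_lagrange n x y : a < x < b -> a < y < b -> x <> y ->
  exists z, Rabs (z - x) <= Rabs (y - x) /\
    phi y = sum_f_R0 (fun m => (y - x) ^ m / INR (Factorial.fact m) * Derive_n phi m x) n
            + (y - x) ^ S n / INR (Factorial.fact (S n)) * Derive_n phi (S n) z.
Proof.
  intros Hx Hy Hxy. destruct (Rlt_or_le x y) as [Hlt|Hle].
  - destruct (Taylor_Lagrange phi n x y Hlt) as [z [Hz E]].
    { intros t Ht k _. apply phi_smooth. lra. }
    exists z. split; [rewrite !Rabs_right by lra; lra|easy].
  - set (g := fun t => phi (- t)).
    assert (Hg : forall m t, a < - t < b -> Derive_n g m t = (-1) ^ m * Derive_n phi m (- t)).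
    { intros m t Ht. apply Derive_n_comp_opp.
      apply (filter_imp (fun u => a < u < b)); [intros; now apply phi_smooth|].
      now apply locally_in_interval. }
    destruct (Taylor_Lagrange g n (- x) (- y)) as [z [Hz E]]; [lra| |].
    { intros t Ht k _. apply ex_derive_n_comp_opp.
      apply (filter_imp (fun u => a < u < b)); [intros; now apply phi_smooth|].
      apply locally_in_interval. lra. }
    exists (- z). split; [rewrite !Rabs_left1 by lra; lra|].
    replace (phi y) with (g (- y)) by (unfold g; now rewrite Ropp_involutive).
    rewrite E, Hg by lra. f_equal.
    + apply sum_eq. intros m _. rewrite Hg, Ropp_involutive by lra.
      replace (y - x) with ((- y - - x) * (-1)) by ring. rewrite Rpow_mult_distr. field.
      apply INR_fact_neq_0.
    + replace (y - x) with ((- y - - x) * (-1)) by ring. rewrite Rpow_mult_distr. field.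
      apply INR_fact_neq_0.
Qed.

Lemma taylor_order1 x y : a < x < b -> a < y < b -> x <> y ->
  exists z, Rabs (z - x) <= Rabs (y - x) /\
    phi y = phi x + (y - x) * Derive phi x + (y - x) ^ 2 / 2 * Derive_n phi 2 z.
Proof.
  intros Hx Hy Hxy. destruct (taylor_lagrange 1 x y Hx Hy Hxy) as [z [Hz E]].
  exists z. split; [easy|]. rewrite E.
  cbn [sum_f_R0 Factorial.fact INR Nat.mul Nat.add]. change (Derive_n phi 0 x) with (phi x).
  change (Derive_n phi 1 x) with (Derive phi x). field.
Qed.

Lemma taylor_order3 x y : a < x < b -> a < y < b -> x <> y ->
  exists z, Rabs (z - x) <= Rabs (y - x) /\
    phi y = phi x + (y - x) * Derive phi x + (y - x) ^ 2 / 2 * Derive_n phi 2 x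
            + (y - x) ^ 3 / 6 * Derive_n phi 3 x + (y - x) ^ 4 / 24 * Derive_n phi 4 z.
Proof.
  intros Hx Hy Hxy. destruct (taylor_lagrange 3 x y Hx Hy Hxy) as [z [Hz E]].
  exists z. split; [easy|]. rewrite E.
  cbn [sum_f_R0 Factorial.fact INR Nat.mul Nat.add]. change (Derive_n phi 0 x) with (phi x).
  change (Derive_n phi 1 x) with (Derive phi x). field.
Qed.

Lemma Dfwd_approx x h B : 0 < h -> a < x - h -> x + h < b ->
  (forall z, Rabs (z - x) <= h -> Rabs (Derive_n phi 2 z) <= B) ->
  Rabs (Dfwd h x (fun y => phi x - phi y) + Derive phi x) <= B / 2 * h.
Proof.
  intros Hh Ha Hb HB. destruct (taylor_order1 x (x + h)) as [z [Hz E]]; try lra.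
  replace (x + h - x) with h in * by ring. rewrite (Rabs_right h) in Hz by lra.
  unfold Dfwd. rewrite E.
  replace ((phi x - (phi x + h * Derive phi x + h ^ 2 / 2 * Derive_n phi 2 z)) / h + Derive phi x)
    with (- (h / 2) * Derive_n phi 2 z) by (field; lra).
  rewrite Rabs_mult, Rabs_Ropp, (Rabs_right (h / 2)) by lra.
  specialize (HB z Hz). nra.
Qed.

Lemma Dbwd_approx x h B : 0 < h -> a < x - h -> x + h < b ->
  (forall z, Rabs (z - x) <= h -> Rabs (Derive_n phi 2 z) <= B) ->
  Rabs (Dbwd h x (fun y => phi x - phi y) - Derive phi x) <= B / 2 * h.
Proof.
  intros Hh Ha Hb HB. destruct (taylor_order1 x (x - h)) as [z [Hz E]]; try lra.
  replace (x - h - x) with (- h) in * by ring. rewrite Rabs_Ropp, (Rabs_right h) in Hz by lra.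
  unfold Dbwd. rewrite E.
  replace ((phi x - (phi x + - h * Derive phi x + (- h) ^ 2 / 2 * Derive_n phi 2 z)) / h
           - Derive phi x)
    with (- (h / 2) * Derive_n phi 2 z) by (field; lra).
  rewrite Rabs_mult, Rabs_Ropp, (Rabs_right (h / 2)) by lra.
  specialize (HB z Hz). nra.
Qed.

Lemma uxx_approx x h B : 0 < h -> a < x - h -> x + h < b ->
  (forall z, Rabs (z - x) <= h -> Rabs (Derive_n phi 4 z) <= B) ->
  Rabs (uxx h x (fun y => phi x - phi y) - Derive_n phi 2 x) <= B / 12 * h ^ 2.
Proof.
  intros Hh Ha Hb HB.
  destruct (taylor_order3 x (x + h)) as [z1 [Hz1 E1]]; try lra.
  destruct (taylor_order3 x (x - h)) as [z2 [Hz2 E2]]; try lra.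
  replace (x + h - x) with h in * by ring. replace (x - h - x) with (- h) in * by ring.
  rewrite (Rabs_right h) in Hz1 by lra. rewrite Rabs_Ropp, (Rabs_right h) in Hz2 by lra.
  unfold uxx. rewrite E1, E2.
  replace (- ((phi x - (phi x + h * Derive phi x + h ^ 2 / 2 * Derive_n phi 2 x
                        + h ^ 3 / 6 * Derive_n phi 3 x + h ^ 4 / 24 * Derive_n phi 4 z1))
              + (phi x - (phi x + - h * Derive phi x + (- h) ^ 2 / 2 * Derive_n phi 2 x
                          + (- h) ^ 3 / 6 * Derive_n phi 3 x
                          + (- h) ^ 4 / 24 * Derive_n phi 4 z2))) / h ^ 2
           - Derive_n phi 2 x)
    with (h ^ 2 / 24 * (Derive_n phi 4 z1 + Derive_n phi 4 z2)) by (field; lra).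
  pose proof (pow_lt h 2 Hh).
  rewrite Rabs_mult, (Rabs_right (h ^ 2 / 24)) by lra.
  pose proof (Rabs_triang (Derive_n phi 4 z1) (Derive_n phi 4 z2)).
  pose proof (HB z1 Hz1). pose proof (HB z2 Hz2). nra.
Qed.

End SmoothFunction.

(** * The scaling [K = h^(-1/3)], [L = h^(-4/3)] *)

Lemma Rpower_cube_div3 e n : 0 < e -> Rpower (e ^ 3) (INR n / 3) = e ^ n.
Proof.
  intros He. rewrite <- Rpower_pow, Rpower_mult, <- Rpower_pow by easy.
  f_equal. simpl. field.
Qed.

Lemma Rpower_cube_opp_div3 e n : 0 < e -> Rpower (e ^ 3) (- (INR n / 3)) = / e ^ n.
Proof. intros He. now rewrite Rpower_Ropp, Rpower_cube_div3. Qed.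

Lemma Kh_cube e : 0 < e -> Kh (e ^ 3) = / e.
Proof.
  intros He. unfold Kh. replace (1 / 3) with (INR 1 / 3) by (simpl; lra).
  now rewrite Rpower_cube_opp_div3, pow_1.
Qed.

Lemma Lh_cube e : 0 < e -> Lh (e ^ 3) = / e ^ 4.
Proof.
  intros He. unfold Lh. replace (4 / 3) with (INR 4 / 3) by (simpl; lra).
  now rewrite Rpower_cube_opp_div3.
Qed.

Lemma Ch_cube e : 0 < e -> Ch (e ^ 3) = / e ^ 4 + 2 * / e ^ 10.
Proof.
  intros He. unfold Ch. replace (4 / 3) with (INR 4 / 3) by (simpl; lra).
  replace (10 / 3) with (INR 10 / 3) by (simpl; lra).
  now rewrite !Rpower_cube_opp_div3.
Qed.

Lemma Rpower_cube_two_thirds e : 0 < e -> Rpower (e ^ 3) (2 / 3) = e ^ 2.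
Proof.
  intros He. replace (2 / 3) with (INR 2 / 3) by (simpl; lra). now rewrite Rpower_cube_div3.
Qed.

Lemma on_lattice_shift h y : on_lattice h y -> on_lattice h (y + h) /\ on_lattice h (y - h).
Proof.
  intros [k Hk]. split; [exists (k + 1)%Z|exists (k - 1)%Z];
    rewrite Hk, ?plus_IZR, ?minus_IZR; simpl; ring.
Qed.

Lemma F1De_lipschitz h x r s v w M : 0 < h -> on_lattice h x ->
  (forall y, on_lattice h y -> Rabs (v y - w y) <= M) ->
  Rabs (F1De_op (Kh h) (Lh h) h x r v - F1De_op (Kh h) (Lh h) h x s w)
    <= Ch h * Rmax (Rabs (r - s)) M.
Proof.
  intros Hh Hx HM. destruct (on_lattice_shift h x Hx) as [Hxp Hxm].
  assert (HM0 : 0 <= M) by (eapply Rle_trans; [apply Rabs_pos|apply (HM x Hx)]).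
  destruct (exists_cube_root h Hh) as [e [He ->]].
  pose proof (pow_lt e 4 He) as He4. pose proof (pow_lt e 10 He) as He10.
  rewrite Kh_cube, Lh_cube, Ch_cube by easy.
  eapply Rle_trans.
  - apply F1De_op_lipschitz.
    + apply Rlt_le, Rinv_0_lt_compat, He.
    + apply Rlt_le, Rinv_0_lt_compat; lra.
    + apply uxPlus_sub_le; auto.
    + apply uxMinusNeg_sub_le; auto.
    + apply uxx_sub_le; auto.
  - replace (/ e * (M / e ^ 3) + / e ^ 4 * (2 * M / (e ^ 3) ^ 2))
      with ((/ e ^ 4 + 2 * / e ^ 10) * M) by (field; lra).
    apply Rmult_le_compat_l; [|apply Rmax_r].
    pose proof (Rinv_0_lt_compat _ He4). pose proof (Rinv_0_lt_compat _ He10). lra.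
Qed.

Lemma F1De_accuracy phi a b : a < -1 -> 1 < b ->
  (forall (n : nat) (x : R), a < x < b -> ex_derive_n phi n x) ->
  exists C h0, 0 < C /\ 0 < h0 /\ forall h x, 0 < h < h0 -> -1 < x < 1 ->
    Rabs (F1De h phi x - F1D phi x) <= C * Rpower h (2 / 3).
Proof.
  intros Ha Hb Hs.
  set (eta := Rmin 1 (Rmin ((-1 - a) / 2) ((b - 1) / 2))).
  assert (Heta : 0 < eta <= 1 /\ a < -1 - eta /\ 1 + eta < b).
  { unfold eta, Rmin. repeat destruct Rle_dec; lra. }
  destruct (Derive_n_bounded phi a b Hs 4 (-1 - eta) (1 + eta)) as [B [HB Hbound]]; try lra.
  exists (19 * B), eta. split; [lra|]. split; [lra|].
  intros h x Hh Hx. destruct (exists_cube_root h) as [e [He ->]]; [lra|].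
  assert (He1 : e <= 1) by (apply cube_le_inv; simpl; lra).
  assert (Hnear : forall k z, (k <= 4)%nat -> Rabs (z - x) <= e ^ 3 ->
                              Rabs (Derive_n phi k z) <= B).
  { intros k z Hk Hz%Rabs_le_between. apply Hbound; [easy|lra]. }
  pose proof (pow_lt e 3 He) as He3.
  unfold F1De, F1D. rewrite Kh_cube, Lh_cube, Rpower_cube_two_thirds by easy.
  change (cbrt (Derive phi x ^ 2 * Derive_n phi 2 x)) with (Aop (Derive phi x) (Derive_n phi 2 x)).
  pose proof (Rmult_lt_0_compat _ _ HB He3).
  assert (Hx0 : Rabs (x - x) <= e ^ 3) by (rewrite Rminus_diag, Rabs_R0; lra).
  apply F1De_op_approx.
  - lra.
  - exact (Hnear 1%nat x ltac:(lia) Hx0).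
  - exact (Hnear 2%nat x ltac:(lia) Hx0).
  - eapply Rle_trans; [apply (Dfwd_approx phi a b Hs x (e ^ 3) B); try lra|lra].
    intros z Hz. apply Hnear; [lia|easy].
  - eapply Rle_trans; [apply (Dbwd_approx phi a b Hs x (e ^ 3) B); try lra|lra].
    intros z Hz. apply Hnear; [lia|easy].
  - eapply Rle_trans; [apply (uxx_approx phi a b Hs x (e ^ 3) B); try lra|].
    + intros z Hz. apply Hnear; [lia|easy].
    + replace (e ^ 6) with ((e ^ 3) ^ 2) by ring.
      apply Rmult_le_compat_r; [apply pow2_ge_0|lra].
Qed.

Lemma consistency_of_accuracy (G : R -> R -> R) (F : R -> R) (P : R -> R -> Prop) C h0 x :
  0 < h0 -> continuity_pt F x ->
  (forall h y, 0 < h < h0 -> P h y -> Rabs (G h y - F y) <= C * Rpower h (2 / 3)) ->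
  forall eps, 0 < eps -> exists delta, 0 < delta /\
    forall h y, 0 < h < delta -> P h y -> Rabs (y - x) < delta -> Rabs (G h y - F x) < eps.
Proof.
  intros Hh0 HF Hacc eps Heps.
  destruct (HF (eps / 2) ltac:(lra)) as [alpha [Halpha Hcont]].
  set (c := eps / (2 * (Rabs C + 1))).
  assert (Hc : 0 < c) by (unfold c; pose proof (Rabs_pos C); apply Rdiv_lt_0_compat; lra).
  set (eta := Rpower c (3 / 2)).
  assert (Heta : 0 < eta) by apply exp_pos.
  exists (Rmin h0 (Rmin alpha eta)).
  split; [unfold Rmin; repeat destruct Rle_dec; lra|].
  intros h y Hh HP Hy.
  pose proof (Rmin_l h0 (Rmin alpha eta)). pose proof (Rmin_r h0 (Rmin alpha eta)).
  pose proof (Rmin_l alpha eta). pose proof (Rmin_r alpha eta).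
  assert (Hrate : Rpower h (2 / 3) < c).
  { replace c with (Rpower eta (2 / 3)).
    - apply Rlt_Rpower_l; lra.
    - unfold eta. rewrite Rpower_mult. replace (3 / 2 * (2 / 3)) with 1 by field.
      now apply Rpower_1. }
  assert (Herr : C * Rpower h (2 / 3) < eps / 2).
  { pose proof (exp_pos (2 / 3 * ln h)) as Hpos. fold (Rpower h (2 / 3)) in Hpos.
    pose proof (Rle_abs C).
    apply Rle_lt_trans with ((Rabs C + 1) * Rpower h (2 / 3)); [nra|].
    replace (eps / 2) with ((Rabs C + 1) * c) by (unfold c; field; pose proof (Rabs_pos C); lra).
    apply Rmult_lt_compat_l; [pose proof (Rabs_pos C); lra|easy]. }
  assert (Hcont' : Rabs (F y - F x) < eps / 2).
  { destruct (Req_dec y x) as [->|Hyx]; [rewrite Rminus_diag, Rabs_R0; lra|].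
    apply Hcont. split; [split; [exact I|auto]|]. simpl. unfold R_dist. lra. }
  specialize (Hacc h y ltac:(lra) HP).
  replace (G h y - F x) with ((G h y - F y) + (F y - F x)) by ring.
  eapply Rle_lt_trans; [apply Rabs_triang|]. lra.
Qed.

Theorem mainTheorem8 :
  (* consistency and accuracy, for phi smooth on a neighbourhood (a,b) of [-1,1] *)
  (forall (phi : R -> R) (a b : R),
      a < -1 -> 1 < b ->
      (forall (n : nat) (x : R), a < x < b -> ex_derive_n phi n x) ->
      (* consistency: lim_{h -> 0, y -> x} F^h[phi](y) = F[phi](x), y grid points *)
      (forall x : R, -1 < x < 1 ->
         forall eps : R, 0 < eps ->
         exists delta : R, 0 < delta /\
           forall h y : R, 0 < h < delta -> grid_point h y -> Rabs (y - x) < delta ->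
             Rabs (F1De h phi y - F1D phi x) < eps)
      /\
      (* accuracy: F^h[phi](x) - F[phi](x) = O(h^(2/3)) *)
      (exists C h0 : R, 0 < C /\ 0 < h0 /\
         forall h x : R, 0 < h < h0 -> grid_point h x ->
           Rabs (F1De h phi x - F1D phi x) <= C * Rpower h (2/3)))
  /\
  (* Lipschitz continuity with constant C^h = h^(-4/3) + 2 h^(-10/3) *)
  (forall h : R, 0 < h ->
     forall (x r s : R) (v w : R -> R) (M : R),
       grid_point h x ->
       (forall y : R, on_lattice h y -> Rabs (v y - w y) <= M) ->
       Rabs (F1De_op (Kh h) (Lh h) h x r v - F1De_op (Kh h) (Lh h) h x s w)
         <= Ch h * Rmax (Rabs (r - s)) M).
Proof.
  split.
  - intros phi a b Ha Hb Hs.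
    destruct (F1De_accuracy phi a b Ha Hb Hs) as [C [h0 [HC [Hh0 Hacc]]]].
    assert (Hgrid : forall h y, 0 < h < h0 -> grid_point h y ->
                      Rabs (F1De h phi y - F1D phi y) <= C * Rpower h (2 / 3)).
    { intros h y Hh [Hy _]. now apply Hacc. }
    split.
    + intros x Hx. apply (consistency_of_accuracy _ _ _ C h0); try easy.
      apply (F1D_continuous phi a b Hs). lra.
    + now exists C, h0.
  - intros h Hh x r s v w M [_ Hx] HM. now apply F1De_lipschitz.
Qed.
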